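(* Let $P$ be a continuous $L$-ordered set. Then ${\rm pt}_L\sigma_L(P)$, with its spectral $L$-topology, is a locally super-compact $L$-sober space.
   Context: $L$ is a frame with implication $\to$. $L$-subsets: maps to $L$; nonempty: $\bigvee A=1$; ${\rm sub}_X(A,B)=\bigwedge_xA(x)\to B(x)$. $L$-topology: $\mathcal O(X)\subseteq L^X$ closed under finite meets and arbitrary joins containing all constants $a_X$; interior $A^\circ$ = join of open sets below $A$. Super-compact: nonempty $A$ with ${\rm sub}_X(A,\bigvee_iV_i)=\bigvee_i{\rm sub}_X(A,V_i)$ for all families of open $V_i$; ${\rm SC}(X)$ their set. Locally super-compact: each open $A=\bigvee_{B\in{\rm SC}(X)}{\rm sub}_X(B,A)\wedge B^\circ$. A point of $\mathcal O(X)$: $p:\mathcal O(X)\to L$ preserving binary meets and arbitrary joins with $p(\lambda_X)=\lambda$; $[x](A)=A(x)$; $L$-sober: $x\mapsto[x]$ bijective onto the points. ${\rm pt}_L\mathcal O(X)$: the set of points with spectral $L$-topology $\{\phi(A):A\in\mathcal O(X)\}$, $\phi(A)(p)=p(A)$. $L$-order $e$ on $P$: $e(x,x)=1$, $e(x,y)\wedge e(y,z)\le e(x,z)$, $e(x,y)\wedge e(y,x)=1\Rightarrow x=y$. ${\downarrow}y(x)=e(x,y)$; $\sqcup A=x$ iff $e(x,y)={\rm sub}_P(A,{\downarrow}y)$ for all $y$; directed: nonempty and $D(x)\wedge D(y)\le\bigvee_zD(z)\wedge e(x,z)\wedge e(y,z)$; ideal: directed lower set; ${\Downarrow}x(y)=\bigwedge\{e(x,\sqcup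 I)\to I(y):I\text{ ideal with a supremum}\}$; continuous $L$-ordered set: each ${\Downarrow}x$ directed with supremum $x$ (not necessarily an $L$-dcpo). $\sigma_L(P)$: upper sets $A$ with $A(\sqcup D)=\bigvee_xA(x)\wedge D(x)$ for every directed $D$ having a supremum. *)

(* A frame (complete Heyting algebra) with implication. Arbitrary joins are
   indexed by subsets of the carrier; binary meets; implication right adjoint
   to meet (this gives frame distributivity). *)
Record frame := Frame {
  car :> Type;
  fle : car -> car -> Prop;
  fle_refl : forall a, fle a a;
  fle_trans : forall a b c, fle a b -> fle b c -> fle a c;
  fle_antisym : forall a b, fle a b -> fle b a -> a = b;
  fsup : (car -> Prop) -> car;
  fsup_ub : forall S a, S a -> fle a (fsup S);
  fsup_least : forall S b, (forall a, S a -> fle a b) -> fle (fsup S) b;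
  fmeet : car -> car -> car;
  fmeet_l : forall a b, fle (fmeet a b) a;
  fmeet_r : forall a b, fle (fmeet a b) b;
  fmeet_glb : forall a b c, fle c a -> fle c b -> fle c (fmeet a b);
  fimp : car -> car -> car;
  fimp_adj : forall a b c, fle (fmeet a b) c <-> fle a (fimp b c)
}.

Arguments fle {f}.
Arguments fsup {f}.
Arguments fmeet {f}.
Arguments fimp {f}.

Section Frames.
Variable L : frame.

Definition ftop : L := fsup (fun _ => True).
Definition finf (S : L -> Prop) : L := fsup (fun a => forall b, S b -> fle a b).

Section Space.
Variable X : Type.

Definition ljoin (S : (X -> L) -> Prop) : X -> L :=
  fun x => fsup (fun a => exists A, S A /\ A x = a).

Definition nonemptyL (A : X -> L) : Prop := fsup (fun a => exists x, A x = a) = ftop.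

Definition subL (A B : X -> L) : L := finf (fun a => exists x, a = fimp (A x) (B x)).

Definition is_Ltop (O : (X -> L) -> Prop) : Prop :=
  (forall A B, O A -> O B -> O (fun x => fmeet (A x) (B x))) /\
  (forall S : (X -> L) -> Prop, (forall A, S A -> O A) -> O (ljoin S)) /\
  (forall a : L, O (fun _ => a)).

Definition interior (O : (X -> L) -> Prop) (A : X -> L) : X -> L :=
  ljoin (fun B => O B /\ forall y, fle (B y) (A y)).

Definition super_compact (O : (X -> L) -> Prop) (A : X -> L) : Prop :=
  nonemptyL A /\
  forall S : (X -> L) -> Prop, (forall V, S V -> O V) ->
    subL A (ljoin S) = fsup (fun a => exists V, S V /\ subL A V = a).

Definition locally_super_compact (O : (X -> L) -> Prop) : Prop :=
  forall A, O A -> forall x,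
    A x = fsup (fun a => exists B, super_compact O B /\
                                   a = fmeet (subL B A) (interior O B x)).

Definition opens (O : (X -> L) -> Prop) := { A : X -> L | O A }.

Definition is_point (O : (X -> L) -> Prop) (p : opens O -> L) : Prop :=
  (forall A B C : opens O,
      (forall x, proj1_sig C x = fmeet (proj1_sig A x) (proj1_sig B x)) ->
      p C = fmeet (p A) (p B)) /\
  (forall (S : opens O -> Prop) (C : opens O),
      (forall x, proj1_sig C x = fsup (fun a => exists A, S A /\ proj1_sig A x = a)) ->
      p C = fsup (fun a => exists A, S A /\ p A = a)) /\
  (forall (lam : L) (C : opens O), (forall x, proj1_sig C x = lam) -> p C = lam).

Definition eval_pt (O : (X -> L) -> Prop) (x : X) : opens O -> L :=
  fun A => proj1_sig A x.

Definition L_sober (O : (X -> L) -> Prop) : Prop :=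
  (forall x, is_point O (eval_pt O x)) /\
  (forall x y, eval_pt O x = eval_pt O y -> x = y) /\
  (forall p, is_point O p -> exists x, p = eval_pt O x).

Definition pt (O : (X -> L) -> Prop) := { p : opens O -> L | is_point O p }.

Definition spectral (O : (X -> L) -> Prop) : (pt O -> L) -> Prop :=
  fun F => exists A : opens O, forall p : pt O, F p = proj1_sig p A.

End Space.

Section LOrder.
Variable P : Type.
Variable e : P -> P -> L.

Definition is_Lorder : Prop :=
  (forall x, e x x = ftop) /\
  (forall x y z, fle (fmeet (e x y) (e y z)) (e x z)) /\
  (forall x y, fmeet (e x y) (e y x) = ftop -> x = y).

Definition downset (y : P) : P -> L := fun x => e x y.

Definition is_lsup (A : P -> L) (x : P) : Prop :=
  forall y, e x y = subL P A (downset y).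

Definition directed (D : P -> L) : Prop :=
  nonemptyL P D /\
  forall x y, fle (fmeet (D x) (D y))
                  (fsup (fun a => exists z, a = fmeet (D z) (fmeet (e x z) (e y z)))).

Definition lower_set (A : P -> L) : Prop :=
  forall x y, fle (fmeet (A y) (e x y)) (A x).

Definition upper_set (A : P -> L) : Prop :=
  forall x y, fle (fmeet (A x) (e x y)) (A y).

Definition ideal (I : P -> L) : Prop := directed I /\ lower_set I.

Definition waybelow (x : P) : P -> L :=
  fun y => finf (fun a => exists (I : P -> L) (s : P),
                    ideal I /\ is_lsup I s /\ a = fimp (e x s) (I y)).

Definition continuous_Lordered : Prop :=
  forall x, directed (waybelow x) /\ is_lsup (waybelow x) x.

Definition sigmaL : (P -> L) -> Prop :=
  fun A => upper_set A /\
    forall (D : P -> L) (s : P), directed D -> is_lsup D s ->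
      A s = fsup (fun a => exists x, a = fmeet (A x) (D x)).

End LOrder.
End Frames.

From Stdlib Require Import FunctionalExtensionality ProofIrrelevance.

(* The spectrum pt_L O of any L-topology O is an L-sober L-topological space,
   and for every x the specialization upper set B_x(p) = /\_W (W(x) -> p(W)) of
   the point [x] satisfies sub(B_x, phi(W)) = W(x); since phi preserves joins,
   every B_x is super-compact.  For the Scott L-topology of a continuous P, the
   way-above set z |-> ⇓z(y) is Scott open, its image under phi lies below B_y,
   and every Scott open A splits as A(z) = \/_y A(y) /\ ⇓z(y); applying a point
   to this decomposition gives local super-compactness. *)

Section FrameFacts.
Context {L : frame}.
Implicit Types a b c d : L.

Lemma le_top a : fle a (ftop L).
Proof. apply fsup_ub. exact I. Qed.

Lemma top_le a : fle (ftop L) a -> a = ftop L.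
Proof. intro h. apply fle_antisym; auto using le_top. Qed.

Lemma meet_mono a b c d : fle a c -> fle b d -> fle (fmeet a b) (fmeet c d).
Proof.
  intros. apply fmeet_glb; eapply fle_trans; [apply fmeet_l| |apply fmeet_r|]; auto.
Qed.

Lemma meet_comm a b : fmeet a b = fmeet b a.
Proof. apply fle_antisym; apply fmeet_glb; auto using fmeet_l, fmeet_r. Qed.

Lemma meet_assoc a b c : fmeet (fmeet a b) c = fmeet a (fmeet b c).
Proof.
  apply fle_antisym; repeat apply fmeet_glb; eauto using fle_trans, fmeet_l, fmeet_r.
Qed.

Lemma meet_top_l a : fmeet (ftop L) a = a.
Proof.
  apply fle_antisym; [apply fmeet_r|]. apply fmeet_glb; auto using le_top, fle_refl.
Qed.

Lemma meet_top_r a : fmeet a (ftop L) = a.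
Proof. rewrite meet_comm. apply meet_top_l. Qed.

Lemma le_sup (S : L -> Prop) a b : S a -> fle b a -> fle b (fsup S).
Proof. intros. eapply fle_trans; eauto using fsup_ub. Qed.

Lemma fsup_ext (S T : L -> Prop) : (forall a, S a <-> T a) -> fsup S = fsup T.
Proof.
  intro h. apply fle_antisym; apply fsup_least; intros; apply fsup_ub; apply h; auto.
Qed.

Lemma imp_intro a b c : fle (fmeet a b) c -> fle a (fimp b c).
Proof. apply fimp_adj. Qed.

Lemma imp_elim a b c : fle a (fimp b c) -> fle (fmeet a b) c.
Proof. apply fimp_adj. Qed.

Lemma sup_meet_le (S : L -> Prop) b c :
  (forall a, S a -> fle (fmeet a b) c) -> fle (fmeet (fsup S) b) c.
Proof.
  intro h. apply imp_elim, fsup_least. intros a Ha. apply imp_intro. auto.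
Qed.

Lemma meet_sup_le (S : L -> Prop) b c :
  (forall a, S a -> fle (fmeet b a) c) -> fle (fmeet b (fsup S)) c.
Proof.
  intro h. rewrite meet_comm. apply sup_meet_le. intros. rewrite meet_comm. auto.
Qed.

Lemma finf_lb (S : L -> Prop) b : S b -> fle (finf L S) b.
Proof. intro h. apply fsup_least. auto. Qed.

Lemma finf_glb (S : L -> Prop) a : (forall b, S b -> fle a b) -> fle a (finf L S).
Proof. intro h. apply fsup_ub. auto. Qed.

Lemma imp_mp a b : fle (fmeet (fimp a b) a) b.
Proof. apply imp_elim, fle_refl. Qed.

Lemma imp_top a b : fle a b -> fimp a b = ftop L.
Proof. intro h. apply top_le, imp_intro. eapply fle_trans; [apply fmeet_r | exact h]. Qed.

Lemma subL_le {X : Type} (A B : X -> L) x : fle (fmeet (subL L X A B) (A x)) (B x).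
Proof.
  eapply fle_trans; [|apply imp_mp].
  apply meet_mono; [apply finf_lb; exists x; reflexivity | apply fle_refl].
Qed.

Lemma subL_glb {X : Type} (A B : X -> L) a :
  (forall x, fle (fmeet a (A x)) (B x)) -> fle a (subL L X A B).
Proof. intro h. apply finf_glb. intros b [x ->]. apply imp_intro. auto. Qed.

End FrameFacts.

Ltac meet_proj := match goal with
 | |- fle _ (fmeet _ _) => apply fmeet_glb; meet_proj
 | _ => first [ apply fle_refl
              | eapply fle_trans; [apply fmeet_l|]; meet_proj
              | eapply fle_trans; [apply fmeet_r|]; meet_proj ]
 end.

Definition wayabove {L : frame} {P : Type} (e : P -> P -> L) (y : P) : P -> L :=
  fun z => waybelow L P e z y.

Definition waybelow_hull {L : frame} {P : Type} (e : P -> P -> L) (D : P -> L) : P -> L :=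
  fun t => fsup (fun a => exists x, a = fmeet (D x) (waybelow L P e x t)).

Section LOrderFacts.
Context {L : frame} {P : Type} {e : P -> P -> L}.
Hypothesis He : is_Lorder L P e.

Lemma lorder_refl x : e x x = ftop L.
Proof. apply He. Qed.

Lemma lorder_trans x y z : fle (fmeet (e x y) (e y z)) (e x z).
Proof. apply He. Qed.

Lemma lsup_ub D s x : is_lsup L P e D s -> fle (D x) (e x s).
Proof.
  intro h. rewrite <- (meet_top_l (D x)), <- (lorder_refl s), (h s).
  apply (subL_le D (downset L P e s) x).
Qed.

Lemma lsup_least D s a u :
  is_lsup L P e D s -> (forall x, fle (fmeet a (D x)) (e x u)) -> fle a (e s u).
Proof. intros h h2. rewrite (h u). apply subL_glb, h2. Qed.

Lemma lsup_intro D s :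
  (forall u x, fle (fmeet (e s u) (D x)) (e x u)) ->
  (forall u, fle (subL L P D (downset L P e u)) (e s u)) -> is_lsup L P e D s.
Proof. intros h1 h2 u. apply fle_antisym; auto. apply subL_glb, h1. Qed.

Lemma upper_set_lsup_ge A D s :
  upper_set L P e A -> is_lsup L P e D s ->
  fle (fsup (fun a => exists x, a = fmeet (A x) (D x))) (A s).
Proof.
  intros hu hs. apply fsup_least. intros a [x ->].
  eapply fle_trans; [|apply hu]. apply meet_mono; [apply fle_refl | apply (lsup_ub D s x hs)].
Qed.

Lemma downset_ideal z : ideal L P e (downset L P e z).
Proof.
  unfold downset. split; [split|].
  - apply top_le, fsup_ub. exists z. apply lorder_refl.
  - intros x y. eapply le_sup; [exists z; reflexivity|].
    rewrite lorder_refl, meet_top_l. apply fle_refl.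
  - intros x y. rewrite meet_comm. apply lorder_trans.
Qed.

Lemma downset_lsup z : is_lsup L P e (downset L P e z) z.
Proof.
  apply lsup_intro.
  - intros u x. unfold downset. rewrite meet_comm. apply lorder_trans.
  - intros u. rewrite <- (meet_top_r (subL _ _ _ _)), <- (lorder_refl z).
    apply (subL_le (downset L P e z) (downset L P e u) z).
Qed.

Lemma waybelow_le z y : fle (waybelow L P e z y) (e y z).
Proof.
  rewrite <- (meet_top_r (waybelow _ _ _ _ _)), <- (lorder_refl z).
  eapply fle_trans; [|apply imp_mp]. apply meet_mono; [|apply fle_refl].
  apply finf_lb. exists (downset L P e z), z.
  split; [apply downset_ideal|]. split; [apply downset_lsup | reflexivity].
Qed.

Lemma waybelow_upper z w y :
  fle (fmeet (waybelow L P e z y) (e z w)) (waybelow L P e w y).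
Proof.
  apply finf_glb. intros b [I [s [hI [hs ->]]]]. apply imp_intro.
  rewrite meet_assoc. eapply fle_trans; [|apply imp_mp].
  apply meet_mono; [|apply lorder_trans].
  apply finf_lb. exists I, s. auto.
Qed.

Lemma waybelow_lower x t t' :
  fle (fmeet (waybelow L P e x t) (e t' t)) (waybelow L P e x t').
Proof.
  apply finf_glb. intros b [I [s [hI [hs ->]]]]. apply imp_intro.
  rewrite meet_assoc, (meet_comm (e t' t)), <- meet_assoc.
  eapply fle_trans; [|apply (proj2 hI t' t)]. apply meet_mono; [|apply fle_refl].
  eapply fle_trans; [|apply imp_mp]. apply meet_mono; [|apply fle_refl].
  apply finf_lb. exists I, s. auto.
Qed.

Section Continuous.
Hypothesis Hc : continuous_Lordered L P e.

Lemma waybelow_hull_ideal D : directed L P e D -> ideal L P e (waybelow_hull e D).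
Proof.
  intros hD. unfold waybelow_hull. split; [split|].
  - apply top_le. rewrite <- (proj1 hD). apply fsup_least. intros a [x <-].
    rewrite <- (meet_top_r (D x)), <- (proj1 (proj1 (Hc x))).
    apply meet_sup_le. intros a [t <-].
    eapply le_sup; [exists t; reflexivity|].
    eapply le_sup; [exists x; reflexivity | apply fle_refl].
  - intros t1 t2. apply sup_meet_le. intros a [x1 ->]. apply meet_sup_le. intros a [x2 ->].
    apply fle_trans with (fmeet (fmeet (D x1) (D x2))
      (fmeet (waybelow L P e x1 t1) (waybelow L P e x2 t2))); [meet_proj|].
    eapply fle_trans; [apply meet_mono; [apply (proj2 hD x1 x2) | apply fle_refl]|].
    apply sup_meet_le. intros a [z ->].
    apply fle_trans with (fmeet (D z) (fmeet (waybelow L P e z t1) (waybelow L P e z t2))).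
    { apply fmeet_glb; [meet_proj|]. apply fmeet_glb.
      - eapply fle_trans; [|apply (waybelow_upper x1 z t1)]. meet_proj.
      - eapply fle_trans; [|apply (waybelow_upper x2 z t2)]. meet_proj. }
    eapply fle_trans; [apply meet_mono; [apply fle_refl | apply (proj2 (proj1 (Hc z)) t1 t2)]|].
    apply meet_sup_le. intros a [t ->].
    eapply le_sup; [exists t; reflexivity|].
    apply fmeet_glb; [|meet_proj].
    eapply le_sup; [exists z; reflexivity | meet_proj].
  - intros t' t. apply sup_meet_le. intros a [x ->].
    eapply le_sup; [exists x; reflexivity|]. apply fmeet_glb; [meet_proj|].
    eapply fle_trans; [|apply (waybelow_lower x t t')]. meet_proj.
Qed.

Lemma waybelow_hull_lsup D s : is_lsup L P e D s -> is_lsup L P e (waybelow_hull e D) s.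
Proof.
  intros hs. unfold waybelow_hull. apply lsup_intro.
  - intros u t. apply meet_sup_le. intros a [x ->].
    eapply fle_trans; [|apply (lorder_trans t x u)]. apply fmeet_glb.
    + eapply fle_trans; [|apply (waybelow_le x t)]. meet_proj.
    + eapply fle_trans; [|apply (lorder_trans x s u)].
      apply fmeet_glb; [|meet_proj].
      eapply fle_trans; [|apply (lsup_ub D s x hs)]. meet_proj.
  - intros u. apply (lsup_least D s); [exact hs|]. intros x.
    apply (lsup_least (waybelow L P e x) x); [apply (Hc x)|]. intros t.
    eapply fle_trans; [|apply (subL_le (waybelow_hull e D) (downset L P e u) t)].
    apply fmeet_glb; [meet_proj|].
    eapply le_sup; [exists x; reflexivity | meet_proj].
Qed.

(* For D directed with supremum s, the L-ideal t |-> \/_x D(x) /\ ⇓x(t) also has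
   supremum s, so the definition of ⇓s bounds ⇓s(y) by its value at y. *)
Lemma wayabove_sigmaL y : sigmaL L P e (wayabove e y).
Proof.
  assert (hu : upper_set L P e (wayabove e y)) by (intros x w; apply waybelow_upper).
  split; [exact hu|]. intros D s hD hs.
  apply fle_antisym; [|exact (upper_set_lsup_ge _ D s hu hs)].
  apply fle_trans with (waybelow_hull e D y).
  - unfold wayabove. rewrite <- (meet_top_r (waybelow _ _ _ s y)), <- (lorder_refl s).
    eapply fle_trans; [|apply imp_mp]. apply meet_mono; [|apply fle_refl].
    apply finf_lb. exists (waybelow_hull e D), s.
    split; [apply waybelow_hull_ideal, hD|].
    split; [apply waybelow_hull_lsup, hs | reflexivity].
  - apply fsup_least. intros a [x ->].
    eapply le_sup; [exists x; reflexivity|]. rewrite meet_comm. apply fle_refl.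
Qed.

End Continuous.

Lemma upper_set_meet A B :
  upper_set L P e A -> upper_set L P e B -> upper_set L P e (fun z => fmeet (A z) (B z)).
Proof.
  intros hA hB x y. apply fmeet_glb.
  - eapply fle_trans; [|apply (hA x y)]. meet_proj.
  - eapply fle_trans; [|apply (hB x y)]. meet_proj.
Qed.

Lemma sigmaL_meet A B :
  sigmaL L P e A -> sigmaL L P e B -> sigmaL L P e (fun z => fmeet (A z) (B z)).
Proof.
  intros hA hB. pose proof (upper_set_meet A B (proj1 hA) (proj1 hB)) as hu.
  split; [exact hu|]. intros D s hD hs.
  apply fle_antisym; [|exact (upper_set_lsup_ge _ D s hu hs)].
  rewrite (proj2 hA D s hD hs), (proj2 hB D s hD hs).
  apply sup_meet_le. intros a [x ->]. apply meet_sup_le. intros b [y ->].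
  apply fle_trans with (fmeet (fmeet (A x) (B y)) (fmeet (D x) (D y))); [meet_proj|].
  eapply fle_trans; [apply meet_mono; [apply fle_refl | apply (proj2 hD x y)]|].
  apply meet_sup_le. intros a [z ->]. eapply le_sup; [exists z; reflexivity|].
  apply fmeet_glb; [apply fmeet_glb|meet_proj].
  - eapply fle_trans; [|apply (proj1 hA x z)]. meet_proj.
  - eapply fle_trans; [|apply (proj1 hB y z)]. meet_proj.
Qed.

Lemma sigmaL_join (S : (P -> L) -> Prop) :
  (forall A, S A -> sigmaL L P e A) -> sigmaL L P e (ljoin L P S).
Proof.
  intros hS. assert (hu : upper_set L P e (ljoin L P S)).
  { intros x y. apply sup_meet_le. intros a [A [hA <-]].
    eapply le_sup; [exists A; split; eauto | apply (proj1 (hS A hA))]. }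
  split; [exact hu|]. intros D s hD hs.
  apply fle_antisym; [|exact (upper_set_lsup_ge _ D s hu hs)].
  apply fsup_least. intros a [A [hA <-]].
  rewrite (proj2 (hS A hA) D s hD hs). apply fsup_least. intros a [x ->].
  eapply le_sup; [exists x; reflexivity|]. apply meet_mono; [|apply fle_refl].
  eapply le_sup; [exists A; split; eauto | apply fle_refl].
Qed.

Lemma sigmaL_const a : sigmaL L P e (fun _ => a).
Proof.
  split; [intros x y; apply fmeet_l|]. intros D s hD hs. apply fle_antisym.
  - apply fle_trans with (fmeet a (ftop L)); [rewrite meet_top_r; apply fle_refl|].
    rewrite <- (proj1 hD). apply meet_sup_le.
    intros b [x <-]. eapply le_sup; [exists x; reflexivity | apply fle_refl].
  - apply fsup_least. intros b [x ->]. apply fmeet_l.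
Qed.

Lemma sigmaL_is_Ltop : is_Ltop L P (sigmaL L P e).
Proof. split; [exact sigmaL_meet | split; [exact sigmaL_join | exact sigmaL_const]]. Qed.

End LOrderFacts.

Lemma eval_pt_is_point {L : frame} {X : Type} (O : (X -> L) -> Prop) x :
  is_point L X O (eval_pt L X O x).
Proof.
  split; [|split].
  - intros A B C h. apply h.
  - intros S C h. apply h.
  - intros lam C h. apply h.
Qed.

Section Spectrum.
Context {L : frame} {X : Type} (O : (X -> L) -> Prop).

Lemma spectral_eq F : spectral L X O F -> exists W, F = fun p : pt L X O => proj1_sig p W.
Proof. intros [W h]. exists W. apply functional_extensionality. auto. Qed.

Lemma point_mono p (A B : opens L X O) :
  is_point L X O p -> (forall x, fle (proj1_sig A x) (proj1_sig B x)) -> fle (p A) (p B).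
Proof.
  intros hp h. rewrite ((proj1 hp) A B A); [apply fmeet_r|].
  intros x. apply fle_antisym; [apply fmeet_glb; auto using fle_refl | apply fmeet_l].
Qed.

Lemma subL_meet_interior_le (A B : X -> L) x :
  fle (fmeet (subL L X B A) (interior L X O B x)) (A x).
Proof.
  apply meet_sup_le. intros b [H [[_ hH] <-]].
  eapply fle_trans; [apply meet_mono; [apply fle_refl | apply hH] | apply subL_le].
Qed.

Lemma spectral_is_Ltop : is_Ltop L X O -> is_Ltop L (pt L X O) (spectral L X O).
Proof.
  intros [hm [hj hc]]. split; [|split].
  - intros F G [A hA] [B hB].
    exists (exist _ _ (hm _ _ (proj2_sig A) (proj2_sig B))).
    intros p. rewrite hA, hB. symmetry. apply (proj1 (proj2_sig p)). reflexivity.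
  - intros S hS.
    set (SA := fun W : opens L X O => S (fun p : pt L X O => proj1_sig p W)).
    assert (HC : O (ljoin L X (fun A => exists W, SA W /\ proj1_sig W = A))).
    { apply hj. intros A [W [_ <-]]. apply proj2_sig. }
    exists (exist _ _ HC). intros p.
    rewrite (proj1 (proj2 (proj2_sig p)) SA).
    + apply fsup_ext. intros a. split.
      * intros [F [hF <-]]. destruct (spectral_eq F (hS F hF)) as [W ->]. eauto.
      * intros [W [hW <-]]. eauto.
    + intros x. apply fsup_ext. intros a. split.
      * intros [A [[W [hW <-]] <-]]. eauto.
      * intros [W [hW <-]]. exists (proj1_sig W). eauto.
  - intros a. exists (exist _ _ (hc a)). intros p. symmetry.
    apply (proj2 (proj2 (proj2_sig p))). reflexivity.
Qed.

Definition pt_of (x : X) : pt L X O := exist _ _ (eval_pt_is_point O x).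

Definition spectral_open (W : opens L X O) : opens L (pt L X O) (spectral L X O) :=
  exist _ (fun p : pt L X O => proj1_sig p W) (ex_intro _ W (fun _ => eq_refl)).

Lemma point_restrict q :
  is_point L (pt L X O) (spectral L X O) q -> is_point L X O (fun W => q (spectral_open W)).
Proof.
  intros hq. split; [|split].
  - intros A B C h. apply (proj1 hq). intros r. apply (proj1 (proj2_sig r)). auto.
  - intros S C h.
    rewrite ((proj1 (proj2 hq)) (fun G => exists A, S A /\ G = spectral_open A)).
    + apply fsup_ext. intros a. split.
      * intros [G [[A [hA ->]] <-]]. eauto.
      * intros [A [hA <-]]. eauto.
    + intros r. simpl. rewrite ((proj1 (proj2 (proj2_sig r))) S C h).
      apply fsup_ext. intros a. split.
      * intros [A [hA <-]]. exists (spectral_open A). eauto.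
      * intros [G [[A [hA ->]] <-]]. eauto.
  - intros lam C h. apply (proj2 (proj2 hq)). intros r.
    apply (proj2 (proj2 (proj2_sig r))). auto.
Qed.

Lemma spectral_L_sober : L_sober L (pt L X O) (spectral L X O).
Proof.
  split; [|split].
  - intros x. apply eval_pt_is_point.
  - intros [p ?] [p' ?] h. apply subset_eq_compat, functional_extensionality. intros W.
    exact (f_equal (fun f => f (spectral_open W)) h).
  - intros q hq. exists (exist _ _ (point_restrict q hq)).
    apply functional_extensionality. intros [F hF].
    destruct (spectral_eq F hF) as [W ->]. unfold eval_pt. simpl.
    f_equal. apply subset_eq_compat. reflexivity.
Qed.

Definition spec_upset (x : X) : pt L X O -> L :=
  fun p => finf L (fun a => exists W : opens L X O, a = fimp (proj1_sig W x) (proj1_sig p W)).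

Lemma spec_upset_pt_of x : spec_upset x (pt_of x) = ftop L.
Proof.
  apply top_le, finf_glb. intros b [W ->]. rewrite imp_top; apply fle_refl.
Qed.

Lemma subL_spec_upset x F :
  spectral L X O F -> subL L (pt L X O) (spec_upset x) F = F (pt_of x).
Proof.
  intros hF. destruct (spectral_eq F hF) as [W ->]. apply fle_antisym.
  - rewrite <- (meet_top_r (subL _ _ _ _)), <- (spec_upset_pt_of x).
    apply (subL_le (spec_upset x) (fun p : pt L X O => proj1_sig p W) (pt_of x)).
  - apply subL_glb. intros p. rewrite meet_comm.
    eapply fle_trans; [|apply imp_mp]. apply meet_mono; [|apply fle_refl].
    apply finf_lb. exists W. reflexivity.
Qed.

Lemma spec_upset_super_compact x :
  is_Ltop L X O -> super_compact L (pt L X O) (spectral L X O) (spec_upset x).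
Proof.
  intros HO. split.
  - apply top_le. eapply le_sup; [exists (pt_of x); reflexivity|].
    rewrite spec_upset_pt_of. apply fle_refl.
  - intros S hS. rewrite subL_spec_upset by (apply (spectral_is_Ltop HO); auto).
    apply fsup_ext. intros a. split.
    + intros [F [hF <-]]. exists F. split; [exact hF|]. apply subL_spec_upset; auto.
    + intros [F [hF <-]]. exists F. split; [exact hF|]. symmetry. apply subL_spec_upset; auto.
Qed.

End Spectrum.

Section ScottSpectrum.
Context {L : frame} {P : Type} {e : P -> P -> L}.
Hypothesis He : is_Lorder L P e.
Local Notation O := (sigmaL L P e).

Definition const_open (a : L) : opens L P O := exist _ _ (sigmaL_const a).

Definition meet_open (U V : opens L P O) : opens L P O :=
  exist _ _ (sigmaL_meet He _ _ (proj2_sig U) (proj2_sig V)).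

Hypothesis Hc : continuous_Lordered L P e.

Definition wayabove_open (y : P) : opens L P O := exist _ _ (wayabove_sigmaL He Hc y).

Lemma point_const_meet p (U : opens L P O) a :
  is_point L P O p -> p (meet_open U (const_open a)) = fmeet (p U) a.
Proof.
  intros hp. rewrite ((proj1 hp) U (const_open a)) by reflexivity.
  f_equal. apply (proj2 (proj2 hp)). reflexivity.
Qed.

Lemma wayabove_open_le_spec_upset y (q : pt L P O) :
  fle (proj1_sig q (wayabove_open y)) (spec_upset O y q).
Proof.
  apply finf_glb. intros b [W ->]. apply imp_intro.
  rewrite <- (point_const_meet _ _ _ (proj2_sig q)).
  apply point_mono; [apply proj2_sig|]. intros z. simpl.
  rewrite meet_comm. eapply fle_trans; [|apply (proj1 (proj2_sig W) y z)].
  apply meet_mono; [apply fle_refl | apply (waybelow_le He)].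
Qed.

(* Scott openness of A at the directed set ⇓z, whose supremum is z. *)
Lemma point_wayabove_decomp p (A : opens L P O) :
  is_point L P O p ->
  p A = fsup (fun a => exists y, a = fmeet (p (wayabove_open y)) (proj1_sig A y)).
Proof.
  intros hp.
  rewrite ((proj1 (proj2 hp)) (fun W => exists y, W = meet_open (wayabove_open y) (const_open (proj1_sig A y))) A).
  - apply fsup_ext. intros a. split.
    + intros [W [[y ->] <-]]. exists y. apply point_const_meet, hp.
    + intros [y ->]. eexists. split; [exists y; reflexivity | apply point_const_meet, hp].
  - intros z. rewrite (proj2 (proj2_sig A) (waybelow L P e z) z (proj1 (Hc z)) (proj2 (Hc z))).
    apply fsup_ext. intros a. split.
    + intros [t ->]. eexists. split; [exists t; reflexivity|]. apply meet_comm.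
    + intros [W [[t ->] <-]]. exists t. apply meet_comm.
Qed.

Lemma spectral_locally_super_compact :
  locally_super_compact L (pt L P O) (spectral L P O).
Proof.
  intros G hG p. apply fle_antisym.
  2:{ apply fsup_least. intros a [B [_ ->]]. apply subL_meet_interior_le. }
  destruct hG as [A hA]. rewrite hA, (point_wayabove_decomp _ A (proj2_sig p)).
  apply fsup_least. intros a [y ->].
  eapply le_sup.
  { exists (spec_upset O y). split; [apply spec_upset_super_compact, sigmaL_is_Ltop, He|].
    reflexivity. }
  rewrite meet_comm. apply meet_mono.
  - rewrite subL_spec_upset by (exists A; exact hA). rewrite hA. apply fle_refl.
  - eapply le_sup; [|apply fle_refl].
    exists (proj1_sig (spectral_open O (wayabove_open y))). split; [|reflexivity].
    split; [apply proj2_sig | apply wayabove_open_le_spec_upset].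
Qed.

End ScottSpectrum.

Theorem proposition6p2 (L : frame) (P : Type) (e : P -> P -> L)
  (He : is_Lorder L P e) (Hc : continuous_Lordered L P e) :
  is_Ltop L (pt L P (sigmaL L P e)) (spectral L P (sigmaL L P e)) /\
  locally_super_compact L (pt L P (sigmaL L P e)) (spectral L P (sigmaL L P e)) /\
  L_sober L (pt L P (sigmaL L P e)) (spectral L P (sigmaL L P e)).
Proof.
  split; [|split].
  - apply spectral_is_Ltop, sigmaL_is_Ltop, He.
  - apply spectral_locally_super_compact; assumption.
  - apply spectral_L_sober.
Qed.
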